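(* Let $n_0,n_1$ be positive integers and $r>1$ an integer. A subset $\mathcal{Z}\subseteq\{1,2,\dots,r-1\}$ is admissible for $(n_0,n_1,r)$ if and only if there exists a pair of integer sequences $(y_\ell)_{\ell\ge0},(z_\ell)_{\ell\ge0}$ satisfying: (C1) $y_\ell\le n_0y_{\ell-1}+n_1z_{\ell-1}$ and $z_\ell\le n_1y_{\ell-1}+n_0z_{\ell-1}$ for every $\ell\ge1$; (C2) $y_{r-1}+z_{r-1}>0$; (C3) $y_\ell=z_\ell=0$ for $\ell\ge r$; (C4) $y_0=1$ and $z_0=0$; (C5) $\min\{y_\ell,z_\ell\}<0$ if and only if $\ell\in\mathcal{Z}$.
   Context: For integers $n,\ell>0$ and a finite-support integer sequence $\mu=(\mu_i)_{i\ge1}$, $\mathsf{K}_\ell(\mu,n)=n^\ell-\sum_{i=1}^{\ell}\mu_i n^{\ell-i}$ (with $0^0=1$). For a pair $(\eta,\omega)$ of nonnegative integer sequences $(\eta_\ell)_{\ell\ge1},(\omega_\ell)_{\ell\ge1}$ with finite support, let $\mathsf{K}^\pm_\ell=\mathsf{K}_\ell(\eta\pm\omega,n_0\pm n_1)$, let $\mathsf{r}(\eta,\omega)$ be the largest index in the union of their supports, and $\mathsf{K}^\pm=\mathsf{K}^\pm_{\mathsf{r}(\eta,\omega)}$. A subset $\mathcal{Z}\subseteq\{1,\dots,r-1\}$ is admissible for $(n_0,n_1,r)$ if there exists such a pair $(\eta,\omega)$ with $\mathsf{r}(\eta,\omega)=r$ and $\mathsf{K}^+=\mathsf{K}^-=0$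 such that, for $\ell\in\{1,\dots,r-1\}$, the inequality $\mathsf{K}^+_\ell\ge|\mathsf{K}^-_\ell|$ fails exactly when $\ell\in\mathcal{Z}$. *)

From mathcomp Require Import all_boot all_order all_algebra.
Set Implicit Arguments. Unset Strict Implicit. Unset Printing Implicit Defensive.
Import Order.TTheory GRing.Theory Num.Theory.
Local Open Scope ring_scope.

(* Sequences (mu_i)_{i>=1} are modelled as functions nat -> _ ; the value at
   index 0 is never used. *)

(* K_l(mu, n) = n^l - sum_{i=1}^{l} mu_i n^(l-i)   (0^0 = 1 in MathComp) *)
Definition K (l : nat) (mu : nat -> int) (n : int) : int :=
  n ^+ l - \sum_(1 <= i < l.+1) mu i * n ^+ (l - i).

Definition fin_supp (s : nat -> nat) : Prop :=
  exists N : nat, forall i : nat, (N < i)%N -> s i = 0%N.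

Definition rank_is (eta omega : nat -> nat) (r : nat) : Prop :=
  (0 < r)%N /\ (eta r <> 0%N \/ omega r <> 0%N) /\
  (forall i : nat, (r < i)%N -> eta i = 0%N /\ omega i = 0%N).

Definition Kplus (eta omega : nat -> nat) (n0 n1 : nat) (l : nat) : int :=
  K l (fun i => (eta i)%:Z + (omega i)%:Z) (n0%:Z + n1%:Z).

Definition Kminus (eta omega : nat -> nat) (n0 n1 : nat) (l : nat) : int :=
  K l (fun i => (eta i)%:Z - (omega i)%:Z) (n0%:Z - n1%:Z).

Definition admissible (n0 n1 r : nat) (Z : {pred nat}) : Prop :=
  (forall l : nat, l \in Z -> (1 <= l <= r.-1)%N) /\
  exists eta omega : nat -> nat,
    [/\ fin_supp eta /\ fin_supp omega, rank_is eta omega r,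
        Kplus eta omega n0 n1 r = 0, Kminus eta omega n0 n1 r = 0 &
        forall l : nat, (1 <= l <= r.-1)%N ->
          (~ (`|Kminus eta omega n0 n1 l| <= Kplus eta omega n0 n1 l) <-> l \in Z)].

(* Since [K_(l+1)(mu, n) = n K_l(mu, n) - mu_(l+1)], [K^+_l] and [K^-_l] are
   [y_l + z_l] and [y_l - z_l] for the sequences [y_0 = 1], [z_0 = 0],
   [y_l = n0 y_(l-1) + n1 z_(l-1) - eta_l], [z_l = n1 y_(l-1) + n0 z_(l-1) - omega_l].
   Hence [K^+_l >= |K^-_l|] says exactly [min(y_l, z_l) >= 0],
   [K^+_r = K^-_r = 0] says [y_r = z_r = 0], nonnegativity of [eta, omega] is
   (C1), and their vanishing beyond [r] propagates [y_r = z_r = 0] to (C3).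
   Conversely, every [(y, z)] satisfying (C1) and (C4) arises in this way, with
   [eta, omega] the slacks of (C1).  Finally [K^+_r = 0] gives
   [eta_r + omega_r = (n0 + n1) (y_(r-1) + z_(r-1))], so the rank condition is
   (C2). *)
From mathcomp Require Import all_boot all_order all_algebra.
From mathcomp Require Import zify ring lra.
Set Implicit Arguments. Unset Strict Implicit. Unset Printing Implicit Defensive.
Import Order.TTheory GRing.Theory Num.Theory.
Local Open Scope ring_scope.

Lemma K0 mu n : K 0 mu n = 1.
Proof. by rewrite /K big_geq // subr0 expr0. Qed.

Lemma KS l mu n : K l.+1 mu n = n * K l mu n - mu l.+1.
Proof.
rewrite /K big_nat_recr //= subnn expr0 mulr1 mulrBr exprS opprD addrA.
congr (_ - _ - _); rewrite mulr_sumr; apply: eq_big_nat => i /andP[_ lt_il].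
by rewrite subSn // exprS mulrCA.
Qed.

Lemma ler_normB_addr (R : realDomainType) (a b : R) :
  (`|a - b| <= a + b) = (0 <= a) && (0 <= b).
Proof. by rewrite ler_norml; apply/andP/andP => -[]; lra. Qed.

Lemma lt0_min_normB (R : realDomainType) (a b : R) :
  (Num.min a b < 0) = ~~ (`|a - b| <= a + b).
Proof. by rewrite ler_normB_addr gt_min negb_and -!ltNge. Qed.

Section Recursion.

Variables (n0 n1 : nat) (eta omega : nat -> nat).

Fixpoint yz (l : nat) : int * int :=
  if l is l'.+1 then
    ((n0%:Z * (yz l').1 + n1%:Z * (yz l').2 - (eta l)%:Z),
     (n1%:Z * (yz l').1 + n0%:Z * (yz l').2 - (omega l)%:Z))
  else (1, 0).

Local Notation y l := (yz l).1.
Local Notation z l := (yz l).2.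
Local Notation Kp := (Kplus eta omega n0 n1).
Local Notation Km := (Kminus eta omega n0 n1).

Lemma Kplus_yz l : Kp l = y l + z l.
Proof. by elim: l => [|l IHl]; rewrite /Kplus ?K0 // KS -/(Kplus _ _ _ _ _) IHl /=; ring. Qed.

Lemma Kminus_yz l : Km l = y l - z l.
Proof. by elim: l => [|l IHl]; rewrite /Kminus ?K0 // KS -/(Kminus _ _ _ _ _) IHl /=; ring. Qed.

Lemma yz_le_step l : (1 <= l)%N ->
  y l <= n0%:Z * y l.-1 + n1%:Z * z l.-1 /\ z l <= n1%:Z * y l.-1 + n0%:Z * z l.-1.
Proof. by case: l => // l _ /=; rewrite !lerBlDr !lerDl. Qed.

Lemma K_eq0_yz l : Kp l = 0 /\ Km l = 0 <-> yz l = (0, 0).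
Proof.
rewrite Kplus_yz Kminus_yz; case: (yz l) => a b /=.
by split=> [[? ?]|[-> ->]]; [congr pair; lia | rewrite subr0].
Qed.

Lemma yz_eq0_ge m : yz m = (0, 0) ->
  (forall i, (m < i)%N -> eta i = 0%N /\ omega i = 0%N) ->
  forall l, (m <= l)%N -> yz l = (0, 0).
Proof.
move=> yz_m vanish; elim=> [|l IHl]; first by rewrite leqn0 => /eqP <-.
rewrite leq_eqVlt => /orP[/eqP <- //|lt_ml].
rewrite /= IHl //=; have [-> ->] := vanish _ lt_ml.
by rewrite !mulr0 !addr0.
Qed.

Lemma Kplus_gt0_rank l : Kp l.+1 = 0 -> (0 < n0 + n1)%N ->
  (0 < Kp l) = (0 < eta l.+1 + omega l.+1)%N.
Proof.
rewrite /Kplus KS -/(Kplus _ _ _ _ _) => /eqP; rewrite subr_eq0 => /eqP E n_gt0.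
by rewrite -ltz_nat PoszD -E pmulr_rgt0 // -PoszD ltz_nat.
Qed.

Lemma K_ineq_yz l : ~ (`|Km l| <= Kp l) <-> Num.min (y l) (z l) < 0.
Proof. by rewrite lt0_min_normB Kplus_yz Kminus_yz; split => /negP. Qed.

End Recursion.

Section Slacks.

Variables (n0 n1 : nat).

(* [slack z y] is the slack of the second inequality of (C1), read as
   [z_l <= n0 z_(l-1) + n1 y_(l-1)]. *)
Definition slack (u v : nat -> int) (l : nat) : nat :=
  absz (n0%:Z * u l.-1 + n1%:Z * v l.-1 - u l)%R.

Lemma slack_eq0_gt (y z : nat -> int) r :
  (forall l, (r <= l)%N -> y l = 0 /\ z l = 0) ->
  forall i, (r < i)%N -> slack y z i = 0%N /\ slack z y i = 0%N.
Proof.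
move=> vanish i lt_ri; rewrite /slack; have [-> ->] := vanish i (ltnW lt_ri).
have [-> ->] : y i.-1 = 0 /\ z i.-1 = 0 by apply: vanish; rewrite -ltnS (ltn_predK lt_ri).
by rewrite !mulr0 !addr0.
Qed.

Lemma yz_slack (y z : nat -> int) :
  y 0%N = 1 -> z 0%N = 0 ->
  (forall l, (1 <= l)%N ->
     y l <= n0%:Z * y l.-1 + n1%:Z * z l.-1 /\ z l <= n1%:Z * y l.-1 + n0%:Z * z l.-1) ->
  forall l, yz n0 n1 (slack y z) (slack z y) l = (y l, z l).
Proof.
move=> y0 z0 C1; elim=> [|l IHl]; first by rewrite y0 z0.
have [le_y le_z] := C1 l.+1 isT.
have slack_y_ge0 : 0 <= n0%:Z * y l + n1%:Z * z l - y l.+1 by rewrite subr_ge0.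
have slack_z_ge0 : 0 <= n0%:Z * z l + n1%:Z * y l - z l.+1 by rewrite subr_ge0 addrC.
rewrite /= IHl /slack /= !abszE !ger0_norm //.
by congr pair; ring.
Qed.

End Slacks.

Lemma iff_extend_off_range (P : nat -> Prop) (Z : {pred nat}) a b :
  (forall l, l \in Z -> (a <= l <= b)%N) ->
  (forall l, ~~ (a <= l <= b)%N -> ~ P l) ->
  (forall l, (a <= l <= b)%N -> P l <-> l \in Z) ->
  forall l, P l <-> l \in Z.
Proof.
move=> sub_Z off_P on_PZ l; case: (boolP (a <= l <= b)%N) => [/on_PZ //|off_l].
by split=> [/(off_P _ off_l) //|/sub_Z]; rewrite (negbTE off_l).
Qed.

Theorem lemma4 (n0 n1 r : nat) (Z : {pred nat}) :
  (0 < n0)%N -> (0 < n1)%N -> (1 < r)%N ->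
  (forall l : nat, l \in Z -> (1 <= l <= r.-1)%N) ->
  (admissible n0 n1 r Z <->
   exists y z : nat -> int,
     [/\ (forall l : nat, (1 <= l)%N ->
            y l <= n0%:Z * y l.-1 + n1%:Z * z l.-1 /\
            z l <= n1%:Z * y l.-1 + n0%:Z * z l.-1),
         0 < y r.-1 + z r.-1,
         (forall l : nat, (r <= l)%N -> y l = 0 /\ z l = 0),
         y 0%N = 1 /\ z 0%N = 0 &
         (forall l : nat, (Num.min (y l) (z l) < 0) <-> l \in Z)]).
Proof.
move=> n0_gt0 _; case: r => // r _ sub_Z /=.
have n_gt0 : (0 < n0 + n1)%N by rewrite addn_gt0 n0_gt0.
split.
- move=> [_ [eta [omega [_ [_ [rank_r vanish] Kp_r Km_r ineq]]]]].
  have yz_r : yz n0 n1 eta omega r.+1 = (0, 0) by apply/K_eq0_yz.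
  have yz_ge := yz_eq0_ge yz_r vanish.
  exists (fun l => (yz n0 n1 eta omega l).1), (fun l => (yz n0 n1 eta omega l).2).
  split=> //; first exact: yz_le_step.
  + by rewrite -Kplus_yz (Kplus_gt0_rank Kp_r n_gt0); case: rank_r; lia.
  + by move=> l /yz_ge ->.
  apply: iff_extend_off_range sub_Z _ _ => [l off_l|l on_l].
    have [->|l_gt0] := posnP l; first by rewrite gt_min.
    by rewrite yz_ge ?minxx ?ltxx //; move: off_l; rewrite l_gt0 -ltnNge.
  by rewrite -K_ineq_yz; exact: ineq _ on_l.
- move=> [y [z [C1 C2 C3 [y0 z0] C5]]].
  set eta := slack n0 n1 y z; set omega := slack n0 n1 z y.
  have yzE : forall l, yz n0 n1 eta omega l = (y l, z l) := yz_slack y0 z0 C1.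
  have vanish := slack_eq0_gt n0 n1 C3.
  have yz_r : yz n0 n1 eta omega r.+1 = (0, 0).
    by rewrite yzE; have [-> ->] := C3 _ (leqnn _).
  have [Kp_r Km_r] := (K_eq0_yz _ _ _ _ _).2 yz_r.
  split=> //; exists eta, omega; split=> //.
  + by split; exists r.+1 => i /vanish[].
  + split=> //; split=> //.
    have : (0 < eta r.+1 + omega r.+1)%N by rewrite -(Kplus_gt0_rank Kp_r n_gt0) Kplus_yz yzE.
    lia.
  + by move=> l _; rewrite K_ineq_yz yzE; exact: C5.
Qed.
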